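(* There is a weight-preserving bijection from $\mathcal{P}3_{o}$ to $\mathcal{D}_{o}\times\mathcal{D}_{4,2}$.
   Context: A partition of $n$ is a non-increasing finite sequence of positive integers (parts) summing to $n$; its weight is the sum of its parts. $\mathcal{P}3_{o}$ denotes the set of partitions into odd parts in which each part size occurs at most $3$ times. $\mathcal{D}_{o}$ denotes the set of partitions into distinct odd parts. $\mathcal{D}_{4,2}$ denotes the set of partitions into distinct parts congruent to $2$ modulo $4$. The weight of a pair of partitions is the sum of the weights of its components; a bijection is weight-preserving if each object and its image have the same weight. *)

From mathcomp Require Import all_boot.
Set Implicit Arguments. Unset Strict Implicit. Unset Printing Implicit Defensive.

Definition is_partition (s : seq nat) : bool :=
  sorted geq s && all (fun x => 0 < x) s.

Definition weight (s : seq nat) : nat := sumn s.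

Definition is_P3o (s : seq nat) : bool :=
  [&& is_partition s, all odd s & all (fun x => count_mem x s <= 3) s].

Definition is_Do (s : seq nat) : bool :=
  [&& is_partition s, all odd s & uniq s].

Definition is_D42 (s : seq nat) : bool :=
  [&& is_partition s, all (fun x => x %% 4 == 2) s & uniq s].

Definition P3o := {s : seq nat | is_P3o s}.
Definition Do := {s : seq nat | is_Do s}.
Definition D42 := {s : seq nat | is_D42 s}.

From mathcomp Require Import all_boot zify.
Set Implicit Arguments.
Unset Strict Implicit.

(* Binary expansion of multiplicities: an odd part k occurring m <= 3 times,
   m = b0 + 2 b1, contributes k to the distinct odd partition if b0 = 1 and
   2k (which is 2 mod 4) to the second partition if b1 = 1.  Conversely the
   multiplicity of k in the glued partition is [k \in D] + 2 [2k \in E].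
   Partitions are compared through their multiplicities, since a partition is
   the unique non-increasing arrangement of its multiset of parts. *)

Lemma geq_trans : transitive geq.
Proof. exact: rev_trans leq_trans. Qed.

Lemma geq_total : total geq.
Proof. by move=> m n; apply: leq_total. Qed.

Lemma geq_sorted_eq (s1 s2 : seq nat) :
  sorted geq s1 -> sorted geq s2 ->
  (forall x, count_mem x s1 = count_mem x s2) -> s1 = s2.
Proof.
move=> s1_sorted s2_sorted eq_count.
apply: (sorted_eq geq_trans) => //.
  by move=> m n /andP[nm mn]; apply/anti_leq/andP.
by apply/allP => x _; apply/eqP.
Qed.

Lemma mem_count_gt0 (T : eqType) (x : T) (s : seq T) :
  (x \in s) = (0 < count_mem x s).
Proof. by rewrite -has_pred1 has_count. Qed.

Lemma count_mem_filter_undup (T : eqType) (a : pred T) (s : seq T) (x : T) :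
  count_mem x [seq y <- undup s | a y] = (x \in s) && a x.
Proof. by rewrite count_uniq_mem ?filter_uniq ?undup_uniq // mem_filter mem_undup andbC. Qed.

Lemma odd_partition (s : seq nat) :
  sorted geq s -> all odd s -> is_partition s.
Proof. by move=> s_sorted /allP odd_s; rewrite /is_partition s_sorted; apply/allP => x /odd_s/odd_gt0. Qed.

Lemma mod4_eq2 (y : nat) : (y %% 4 == 2) = ~~ odd y && odd y./2.
Proof.
rewrite -divn2; have := modn2 y; have := modn2 (y %/ 2).
by case: odd; case: odd => /= ? ?; lia.
Qed.

Lemma double_eq (x y : nat) : (x.*2 == y) = ~~ odd y && (x == y./2).
Proof.
rewrite -{1}(odd_double_half y); case: (odd y) => /=.
  by apply/negbTE/eqP => /(congr1 odd); rewrite oddD !odd_double.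
by rewrite add0n (inj_eq double_inj).
Qed.

Definition odd_multiplicity_parts (s : seq nat) : seq nat :=
  [seq x <- undup s | odd (count_mem x s)].

Definition double_repeated_parts (s : seq nat) : seq nat :=
  [seq x.*2 | x <- undup s & 1 < count_mem x s].

Definition halves_twice (E : seq nat) : seq nat :=
  flatten [seq [:: y./2; y./2] | y <- E].

Definition glue_parts (D E : seq nat) : seq nat :=
  sort geq (D ++ halves_twice E).

Lemma sorted_glue_parts (D E : seq nat) : sorted geq (glue_parts D E).
Proof. exact: (@sort_sorted nat geq geq_total). Qed.

Lemma count_odd_multiplicity_parts (s : seq nat) (x : nat) :
  count_mem x (odd_multiplicity_parts s) = odd (count_mem x s).
Proof.
rewrite count_mem_filter_undup mem_count_gt0.
by case: (count_mem x s).
Qed.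

Lemma count_double_repeated_parts (s : seq nat) (y : nat) :
  count_mem y (double_repeated_parts s) = ~~ odd y && (1 < count_mem y./2 s).
Proof.
rewrite count_map (@eq_count _ (preim double (pred1 y)) (fun x => ~~ odd y && (x == y./2)))
  => [|x]; last exact: double_eq.
case: (odd y) => /=; first exact: count_pred0.
rewrite count_mem_filter_undup mem_count_gt0.
by case: (count_mem _ s) => [|[]].
Qed.

Section Gluing.

Variables (D E : seq nat).
Hypothesis E_even : all (fun y => ~~ odd y) E.

Lemma count_halves_twice (x : nat) :
  count_mem x (halves_twice E) = 2 * count_mem x.*2 E.
Proof.
elim: E E_even => //= y E' IH /andP[y_even /IH ->].
by rewrite -[y == _]eq_sym double_eq y_even eq_sym; case: (_ == _) => /=; lia.
Qed.

Lemma count_glue_parts (x : nat) :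
  count_mem x (glue_parts D E) = count_mem x D + 2 * count_mem x.*2 E.
Proof.
rewrite -count_halves_twice -count_cat.
by apply/permP; rewrite perm_sort.
Qed.

Lemma weight_glue_parts : weight (glue_parts D E) = weight D + weight E.
Proof.
rewrite /weight (perm_sumn (permEl (perm_sort _ _))) sumn_cat.
congr (_ + _); elim: E E_even => //= y E' IH /andP[y_even /IH <-].
by rewrite addnA addnn even_halfK.
Qed.

End Gluing.

Lemma odd_multiplicity_parts_Do (s : seq nat) :
  sorted geq s -> all odd s -> is_Do (odd_multiplicity_parts s).
Proof.
move=> s_sorted odd_s.
have sub_s : subseq (odd_multiplicity_parts s) s.
  exact: subseq_trans (filter_subseq _ _) (undup_subseq s).
have odd_F : all odd (odd_multiplicity_parts s).
  by apply/allP => x /(mem_subseq sub_s)/(allP odd_s).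
rewrite /is_Do odd_partition ?odd_F ?filter_uniq ?undup_uniq //.
by apply: (subseq_sorted geq_trans sub_s).
Qed.

Lemma double_repeated_parts_even (s : seq nat) :
  all (fun y => ~~ odd y) (double_repeated_parts s).
Proof. by rewrite all_map; apply/allP => x _; rewrite /= odd_double. Qed.

Lemma double_repeated_parts_D42 (s : seq nat) :
  sorted geq s -> all odd s -> is_D42 (double_repeated_parts s).
Proof.
move=> s_sorted odd_s; set R := [seq x <- undup s | 1 < count_mem x s].
have sub_s : subseq R s by exact: subseq_trans (filter_subseq _ _) (undup_subseq s).
have odd_R : all odd R by apply/allP => x /(mem_subseq sub_s)/(allP odd_s).
have mod4_F : all (fun y => y %% 4 == 2) (double_repeated_parts s).
  by rewrite all_map; apply: sub_all odd_R => x; rewrite /= mod4_eq2 odd_double doubleK.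
rewrite /is_D42 /is_partition mod4_F /double_repeated_parts -/R all_map.
rewrite (map_inj_uniq double_inj) filter_uniq ?undup_uniq ?andbT //.
rewrite (sub_all _ odd_R) => [|x /odd_gt0]; last by rewrite /= double_gt0.
rewrite andbT; apply: (homo_sorted (e := geq)) => [m n /= | ]; first by rewrite leq_double.
by apply: (subseq_sorted geq_trans sub_s).
Qed.

Lemma D42_even (E : seq nat) : is_D42 E -> all (fun y => ~~ odd y) E.
Proof. by case/and3P => _ /allP mod4_E _; apply/allP => y /mod4_E; rewrite mod4_eq2 => /andP[]. Qed.

Lemma glue_parts_P3o (D E : seq nat) : is_Do D -> is_D42 E -> is_P3o (glue_parts D E).
Proof.
move=> D_Do E_D42; have E_even := D42_even E_D42.
case/and3P: D_Do => _ odd_D uniq_D; case/and3P: E_D42 => _ mod4_E uniq_E.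
have count_glue x : count_mem x (glue_parts D E) = (x \in D) + 2 * (x.*2 \in E).
  by rewrite count_glue_parts // !count_uniq_mem.
have odd_glue : all odd (glue_parts D E).
  apply/allP => x; rewrite mem_count_gt0 count_glue.
  case: (boolP (x \in D)) => [/(allP odd_D) // | _].
  case: (boolP (x.*2 \in E)) => // /(allP mod4_E).
  by rewrite mod4_eq2 doubleK => /andP[].
rewrite /is_P3o odd_partition ?odd_glue ?sorted_glue_parts //=.
by apply/allP => x _; rewrite count_glue; case: (_ \in D); case: (_ \in E).
Qed.

Lemma glue_split_parts (s : seq nat) :
  is_P3o s -> glue_parts (odd_multiplicity_parts s) (double_repeated_parts s) = s.
Proof.
case/and3P=> /andP[s_sorted _] odd_s /allP mult_le3.
apply: geq_sorted_eq => // [|x]; first exact: sorted_glue_parts.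
rewrite count_glue_parts ?double_repeated_parts_even //.
rewrite count_odd_multiplicity_parts count_double_repeated_parts odd_double doubleK /=.
have : count_mem x s <= 3.
  by case: (boolP (x \in s)) => [/mult_le3 // | /count_memPn ->].
by case: (count_mem x s) => [|[|[|[|]]]].
Qed.

Lemma split_glue_parts (D E : seq nat) : is_Do D -> is_D42 E ->
  odd_multiplicity_parts (glue_parts D E) = D /\ double_repeated_parts (glue_parts D E) = E.
Proof.
move=> D_Do E_D42; have E_even := D42_even E_D42.
have [/andP[G_sorted _] odd_G _] := and3P (glue_parts_P3o D_Do E_D42).
case/and3P: D_Do => /andP[D_sorted _] _ uniq_D; case/and3P: E_D42 => /andP[E_sorted _] _ uniq_E.
split; apply: geq_sorted_eq => //.
- by case/and3P: (odd_multiplicity_parts_Do G_sorted odd_G) => /andP[].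
- move=> x; rewrite count_odd_multiplicity_parts count_glue_parts // !count_uniq_mem //.
  by rewrite oddD oddM /= addbF oddb.
- by case/and3P: (double_repeated_parts_D42 G_sorted odd_G) => /andP[].
- move=> y; rewrite count_double_repeated_parts count_glue_parts // !count_uniq_mem //.
  case: (boolP (odd y)) => [odd_y | even_y] /=.
    suff /negbTE -> : y \notin E by [].
    by apply: contraL odd_y => /(allP E_even).
  by rewrite even_halfK //; case: (_ \in D); case: (y \in E).
Qed.

Theorem lemma2p7 :
  exists f : P3o -> Do * D42,
    bijective f /\
    forall p : P3o,
      weight (proj1_sig p) = weight (proj1_sig (f p).1) + weight (proj1_sig (f p).2).
Proof.
have split_ok (p : P3o) :
    is_Do (odd_multiplicity_parts (val p)) /\ is_D42 (double_repeated_parts (val p)).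
  case: p => s s_P3o /=; case/and3P: s_P3o => /andP[s_sorted _] odd_s _.
  by split; [apply: odd_multiplicity_parts_Do | apply: double_repeated_parts_D42].
pose f (p : P3o) : Do * D42 := (exist is_Do _ (proj1 (split_ok p)), exist is_D42 _ (proj2 (split_ok p))).
pose g (q : Do * D42) : P3o := exist is_P3o _ (glue_parts_P3o (proj2_sig q.1) (proj2_sig q.2)).
exists f; split.
- exists g => [[s s_P3o] | [[D D_Do] [E E_D42]]].
    by apply: val_inj; apply: glue_split_parts.
  have [F_D F_E] := split_glue_parts D_Do E_D42.
  by congr pair; apply: val_inj.
- case=> s s_P3o /=.
  by rewrite -{1}(glue_split_parts s_P3o) weight_glue_parts ?double_repeated_parts_even.
Qed.
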